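(* Let $n\ge 2$ be an integer, let $\Omega_n\subset\mathbb{R}^{n^3}$ be the polytope of $n\times n\times n$ stochastic tensors, and let $f_0(\Omega_n)$ be its number of vertices. Then $$f_0(\Omega_n)\ge l_0^{(n-1)^3}(n^3),$$ where $l_0^{(n-1)^3}(n^3)=k$ is the integer $k$ such that $u_0^{(n-1)^3}(k-1)<n^3\le u_0^{(n-1)^3}(k)$.
   Context: An $n\times n\times n$ stochastic tensor is a real array $A=(a_{ijk})_{1\le i,j,k\le n}$ with all $a_{ijk}\ge 0$ and all line sums equal to $1$: $\sum_i a_{ijk}=1$ for all $j,k$; $\sum_j a_{ijk}=1$ for all $i,k$; $\sum_k a_{ijk}=1$ for all $i,j$. The set $\Omega_n$ of such tensors is a convex polytope in $\mathbb{R}^{n^3}$. For a positive integer $d$ and integer $m$, define $$u_0^d(m)=\binom{m-\lfloor \frac{d}{2}\rfloor -1}{\lfloor \frac{d-1}{2}\rfloor}+\binom{m-\lfloor \frac{d-1}{2}\rfloor -1}{\lfloor \frac{d}{2}\rfloor},$$ and for a number $x$, $l_0^d(x)=k$ if and only if $u_0^d(k-1)<x\le u_0^d(k)$. *)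

From mathcomp Require Import all_boot all_order all_algebra.
From mathcomp Require Import reals.
Set Implicit Arguments. Unset Strict Implicit. Unset Printing Implicit Defensive.
Import Order.TTheory GRing.Theory Num.Theory.
Local Open Scope ring_scope.

Definition tensor (R : realType) (n : nat) := {ffun 'I_n * 'I_n * 'I_n -> R}.

Definition stochastic (R : realType) (n : nat) (A : tensor R n) : Prop :=
  (forall i j k, 0 <= A (i, j, k)) /\
  (forall j k, \sum_(i < n) A (i, j, k) = 1) /\
  (forall i k, \sum_(j < n) A (i, j, k) = 1) /\
  (forall i j, \sum_(k < n) A (i, j, k) = 1).

(* Vertices of the polytope Omega_n = extreme points: points of Omega_n that
   are not a proper convex combination of two distinct points of Omega_n. *)
Definition is_vertex (R : realType) (n : nat) (A : tensor R n) : Prop :=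
  stochastic A /\
  forall (B C : tensor R n) (t : R), stochastic B -> stochastic C ->
    0 < t < 1 -> (forall x, A x = t * B x + (1 - t) * C x) -> B = C.

Definition binz (a : int) (b : nat) : nat :=
  match a with Posz a' => 'C(a', b) | Negz _ => 0%N end.

Definition u0 (d : nat) (m : int) : nat :=
  (binz (m - (d./2)%:Z - 1) ((d.-1)./2) + binz (m - ((d.-1)./2)%:Z - 1) (d./2))%N.

Definition is_l0 (d : nat) (x : nat) (k : int) : Prop :=
  (u0 d (k - 1) < x)%N /\ (x <= u0 d k)%N.

(** The 0/1 tensors of Latin squares are vertices of Omega_n, and the cyclic
    squares L(i, j) = p i + q j in Z/n, with p any permutation and q one fixing
    0, give n! (n-1)! distinct vertices.  This count already dominates
    l_0^d(n^3) for d = (n-1)^3: the second binomial of u_0^d(k) is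
    C(k - d + d/2, d/2), which at k = n! (n-1)! exceeds n^3. *)

From mathcomp Require Import all_boot all_order all_algebra all_fingroup.
From mathcomp Require Import reals.
From mathcomp Require Import zify lra.
Set Implicit Arguments.
Unset Strict Implicit.
Unset Printing Implicit Defensive.
Import Order.TTheory GRing.Theory Num.Theory.

Local Open Scope ring_scope.

Lemma sum_indicator (R : pzSemiRingType) (T : finType) (y : T) :
  \sum_x ((x == y)%:R : R) = 1.
Proof. by rewrite (bigD1 y) //= eqxx big1 ?addr0 // => x /negbTE ->. Qed.

Lemma sum_indicator_inj (R : pzSemiRingType) (T : finType) (f : T -> T) (y : T) :
  injective f -> \sum_x ((f x == y)%:R : R) = 1.
Proof.
by move=> f_inj; rewrite -[RHS](sum_indicator R y) [RHS](reindex_inj f_inj).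
Qed.

Lemma convex_comb01_eq (R : realFieldType) (b c t : R) :
  0 <= b <= 1 -> 0 <= c <= 1 -> 0 < t < 1 ->
  t * b + (1 - t) * c = 0 \/ t * b + (1 - t) * c = 1 -> b = c.
Proof. move=> /andP[? ?] /andP[? ?] /andP[? ?] [] ?; nra. Qed.

Section StochasticTensors.
Variables (R : realType) (n : nat).
Implicit Types (A : tensor R n) (L : 'I_n -> 'I_n -> 'I_n).

Lemma stochastic_entry01 A x : stochastic A -> 0 <= A x <= 1.
Proof.
case: x => [[i j] k] [A_ge0 [_ [_ sumk]]]; rewrite A_ge0 -(sumk i j) /=.
by rewrite (bigD1 k) //= lerDl sumr_ge0.
Qed.

Lemma stochastic01_vertex A :
  stochastic A -> (forall x, A x = 0 \/ A x = 1) -> is_vertex A.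
Proof.
move=> A_st A01; split=> // B C t B_st C_st t01 A_eq; apply/ffunP => x.
apply: (convex_comb01_eq (stochastic_entry01 x B_st) (stochastic_entry01 x C_st) t01).
by rewrite -A_eq.
Qed.

Definition latin_square L :=
  (forall j, injective (L^~ j)) /\ (forall i, injective (L i)).

Definition latin_tensor L : tensor R n :=
  [ffun x => ((L x.1.1 x.1.2 == x.2)%:R : R)].

Lemma latin_tensor_stochastic L : latin_square L -> stochastic (latin_tensor L).
Proof.
move=> [L_injl L_injr]; split; [|split; [|split]] => [i j k|j k|i k|i j].
- by rewrite ffunE ler0n.
- by under eq_bigr do rewrite ffunE /=; exact: sum_indicator_inj.
- by under eq_bigr do rewrite ffunE /=; exact: sum_indicator_inj.
- by under eq_bigr do rewrite ffunE /= eq_sym; exact: sum_indicator.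
Qed.

Lemma latin_tensor_vertex L : latin_square L -> is_vertex (latin_tensor L).
Proof.
move/latin_tensor_stochastic/stochastic01_vertex; apply=> x.
by rewrite ffunE; case: eqP; [right|left].
Qed.

Lemma latin_tensor_inj L1 L2 : latin_tensor L1 = latin_tensor L2 -> L1 =2 L2.
Proof.
move=> eqL i j; have /ffunP/(_ (i, j, L1 i j)) := eqL.
by rewrite !ffunE /= eqxx; case: eqP => // _ /eqP; rewrite pnatr_eq0.
Qed.

End StochasticTensors.

Definition cyclic_latin m (p : {perm 'I_m.+1}) (q : {perm 'I_m}) (i j : 'I_m.+1) :=
  p i + lift_perm ord0 ord0 q j.

Lemma cyclic_latin_square m p q : latin_square (@cyclic_latin m p q).
Proof. by split=> [j a b /addIr/perm_inj | i a b /addrI/perm_inj]. Qed.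

Lemma cyclic_latin_inj m p q p' q' :
  @cyclic_latin m p q =2 cyclic_latin p' q' -> (p, q) = (p', q').
Proof.
move=> eqL; have eq_p : p = p'.
  by apply/permP => i; have := eqL i ord0; rewrite /cyclic_latin !lift_perm_id !addr0.
congr pair => //; apply/permP => j; apply: (@lift_inj _ ord0).
by have := eqL ord0 (lift ord0 j); rewrite /cyclic_latin eq_p !lift_perm_lift => /addrI.
Qed.

Local Close Scope ring_scope.

Lemma half_pred_add_half d : d.-1./2 + d./2 = d.-1.
Proof. by case: d => //= e; rewrite uphalf_half addnCA addnn odd_double_half. Qed.

Lemma bin_geq n m : 0 < m < n -> n <= 'C(n, m).
Proof.
case/andP=> m_gt0; elim: n => // n IHn; rewrite ltnS leq_eqVlt => /orP[/eqP <-|lt_mn].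
  by rewrite binSn.
case: m m_gt0 IHn lt_mn => // m _ IHn lt_mn.
have := IHn lt_mn; have : 0 < 'C(n, m) by rewrite bin_gt0 ltnW // ltnW.
by rewrite binS; lia.
Qed.

Lemma bin_le_u0 d K : 0 < d -> d <= K -> 'C(K - d + d./2, d./2) <= u0 d K.
Proof.
move=> d_gt0 le_dK; have := half_pred_add_half d; rewrite /u0 => halves.
have -> : (K%:Z - (d.-1./2)%:Z - 1 = (K - d + d./2)%:Z)%R by lia.
exact: leq_addl.
Qed.

Lemma is_l0_le d x k K : is_l0 d x k ->
  0 < d -> d <= K -> x <= 'C(K - d + d./2, d./2) -> (k <= K%:Z)%R.
Proof.
move=> [lt_u0 _] d_gt0 le_dK le_x; rewrite leNgt; apply/negP => lt_Kk.
case: k lt_Kk lt_u0 => // k lt_Kk.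
have -> : (k%:Z - 1 = k.-1%:Z)%R by lia.
have le_Kk : K <= k.-1 by lia.
have le_u0 := bin_le_u0 d_gt0 (leq_trans le_dK le_Kk).
rewrite ltnNge (leq_trans le_x) // (leq_trans _ le_u0) //.
by rewrite leq_bin2l ?leq_add2r ?leq_sub2r.
Qed.

Lemma cube_le_fact m : m ^ 3 <= m.+1`! * m`!.
Proof.
by rewrite factS expnSr leq_mul ?fact_geq // expnS expn1 leq_mul ?fact_geq.
Qed.

Lemma double_cube_le_fact m : 3 <= m -> 2 * m.+1 ^ 3 <= m.+1`! * m`!.
Proof.
move=> m_ge3; have le_2m_fact : 2 * m <= m`!.
  case: m m_ge3 => // m m_ge2; rewrite factS [2 * _]mulnC leq_mul2l /=.
  exact: leq_trans (fact_geq m).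
rewrite factS -mulnA.
apply: leq_trans (leq_mul (leqnn _) (leq_mul le_2m_fact le_2m_fact)); nia.
Qed.

Lemma cube_le_bin_fact m : 2 <= m ->
  m.+1 ^ 3 <= 'C(m.+1`! * m`! - m ^ 3 + (m ^ 3)./2, (m ^ 3)./2).
Proof.
(* m = 2 is decided by computation: C(8, 4) = 70 >= 27. *)
case: m => [|[|[|m]]] // _.
have le_cube : 2 * m.+4 ^ 3 <= m.+4`! * m.+3`! by exact: double_cube_le_fact.
have lt_cube : m.+3 ^ 3 < m.+4 ^ 3 by rewrite ltn_exp2r.
have b_gt0 : 0 < (m.+3 ^ 3)./2 by rewrite half_gt0 -(exp1n 3) ltn_exp2r.
by apply: (leq_trans _ (bin_geq _)); [|rewrite b_gt0 /=]; lia.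
Qed.

Lemma is_l0_cube_le_fact m k : 0 < m ->
  is_l0 (m ^ 3) (m.+1 ^ 3) k -> (k <= (m.+1`! * m`!)%:Z)%R.
Proof.
case: m => [|[|m]] // _.
  (* u_0^1 <= 2 < 2^3: for n = 2 no k satisfies the hypothesis. *)
  by case=> _; rewrite /u0 /=; case: (_ - _)%R => a; rewrite /binz ?bin0.
move/is_l0_le; apply.
- by rewrite expn_gt0.
- exact: cube_le_fact.
- exact: cube_le_bin_fact.
Qed.

Theorem theorem5 (R : realType) (n : nat) (hn : (2 <= n)%N) (k : int) :
  is_l0 ((n - 1) ^ 3) (n ^ 3) k ->
  exists s : seq (tensor R n),
    [/\ uniq s, (forall A, A \in s -> is_vertex A) & (k <= (size s)%:Z)%R].
Proof.
case: n hn => // m m_gt0; rewrite subn1 /= => /(is_l0_cube_le_fact m_gt0) le_k.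
pose cyclic_tensor (pq : {perm 'I_m.+1} * {perm 'I_m}) :=
  latin_tensor R (cyclic_latin pq.1 pq.2).
exists (map cyclic_tensor (enum {: {perm 'I_m.+1} * {perm 'I_m}})); split.
- rewrite map_inj_uniq ?enum_uniq // => -[p q] [p' q'] /latin_tensor_inj.
  exact: cyclic_latin_inj.
- by move=> A /mapP[pq _ ->]; exact/latin_tensor_vertex/cyclic_latin_square.
- by rewrite size_map -cardE card_prod !card_Sn le_k.
Qed.
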